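(* Let $\mathrm{std}_{surj}:WHA\to WHA_{surj}$ be the $\mathbf Z$-linear map sending a basis substitution $\binom{[y_1^{r_1},\dots,y_k^{r_k}]}{\sigma}$ of $WHA$ to $\binom{[y_1,\dots,y_k]}{\sigma}$ (the top word with its repeated letters removed, the bottom word unchanged). Then $\mathrm{std}_{surj}$ is a Hopf algebra morphism which is the identity on $WHA_{surj}$, hence a Hopf algebra retraction of the inclusion $WHA_{surj}\subset WHA$; moreover it maps $WHA_{inj}$ onto $WHA_{inj}\cap WHA_{surj}=\varphi(MPR)$ and restricts to a Hopf algebra retraction of the inclusion $\varphi(MPR)\subset WHA_{inj}$.
   Context: Words are finite sequences of letters; $*$ denotes concatenation; the support $\mathrm{supp}(\alpha)$ of a word is the set of letters occurring in it. The shuffle product $\alpha\times_{sh}\beta$ of words $\alpha=[c_1,\dots,c_p]$, $\beta=[d_1,\dots,d_q]$ is the sum, with multiplicities, over all ways of choosing $p$ of the $p+q$ positions, of the word obtained by placing the $c$'s in their original order in the chosen positions and the $d$'s in their original order in the remaining ones. A subword of $[a_1,\dots,a_m]$ is a word $[a_{i_1},\dots,a_{i_r}]$ with $i_1<\dots<i_r$. Definition of $dWHA$: Let $\mathcal X$ be a countably infinite alphabet. A substitution is a pair $p=\binom{\rho}{\sigma}$ of words over $\mathcal X$ with $\mathrm{supp}(\rho)=\mathrm{supp}(\sigma)$, considered up to simultaneously renaming the letters of both words by a bijection of $\mathcal X$. $dWHA$ is the free abelian group with basis all substitutions (including the empty substitution $\binom{[\,]}{[\,]}$), graded by $\deg(p)=\#\mathrm{supp}(\rho)$.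 Multiplication: for substitutions $p=\binom{\rho}{\sigma}$, $p'=\binom{\rho'}{\sigma'}$ written with $\mathrm{supp}(\rho)\cap\mathrm{supp}(\rho')=\emptyset$, $m(p\otimes p')=\binom{\rho*\rho'}{\sigma\times_{sh}\sigma'}$, meaning the sum of $\binom{\rho*\rho'}{\gamma}$ over the terms $\gamma$ (with multiplicity) of $\sigma\times_{sh}\sigma'$. The unit is the empty substitution. A good cut of a word $\sigma$ is a factorization $\sigma=\sigma_1*\sigma_2$ with $\mathrm{supp}(\sigma_1)\cap\mathrm{supp}(\sigma_2)=\emptyset$ (the two trivial cuts included). Comultiplication: $\mu(p)=\sum \binom{p^{-1}(\sigma_1)}{\sigma_1}\otimes\binom{p^{-1}(\sigma_2)}{\sigma_2}$, summed over all good cuts $\sigma=\sigma_1*\sigma_2$, where $p^{-1}(\sigma_i)$ is the subword of $\rho$ consisting of all occurrences in $\rho$ of letters of $\mathrm{supp}(\sigma_i)$. Counit: $\varepsilon$ is $1$ on the empty substitution and $0$ on all other substitutions. This is a Hopf algebra. $WHA$ is the sub Hopf algebra of $dWHA$ spanned by the substitutions $\binom{\rho}{\sigma}$ with $\rho=[y_1^{r_1},\dots,y_k^{r_k}]$, $y_1,\dots,y_k$ distinct letters, $r_i\ge1$, where $y^r$ denotes $r$ consecutive copies of $y$. $WHA_{inj}$ (resp. $WHA_{surj}$) is the sub Hopf algebra spanned by those basis substitutions of $WHA$ whose bottom word $\sigma$ (resp. top word $\rho$) has no repeated letter. $\varphi(MPR)$ denotes the sub Hopf algebra of $dWHA$ spanned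 by the substitutions in which neither $\rho$ nor $\sigma$ has a repeated letter (it is the image of the Hopf algebra of permutations $MPR$ under $[t_1,\dots,t_n]\mapsto\binom{[x_1,\dots,x_n]}{[x_{t_1},\dots,x_{t_n}]}$). *)

From HB Require Import structures.
From mathcomp Require Import all_boot all_algebra.
From mathcomp Require Import freeg.

Set Implicit Arguments.
Unset Strict Implicit.
Unset Printing Implicit Defensive.

Import GRing.Theory.
Local Open Scope ring_scope.

Definition word := seq nat.

Definition rename_by (r w : word) : word := [seq index x (undup r) | x <- w].

Definition normS (p : word * word) : word * word :=
  (rename_by p.1 p.1, rename_by p.1 p.2).

(* (rho, sigma) with supp rho = supp sigma, in canonical form (the letters of
   rho are 0,1,2,... in order of first occurrence).  Every class of
   substitutions modulo renaming has exactly one such representative. *)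
Definition valid_subst (p : word * word) : bool :=
  [&& normS p == p, all (fun x => x \in p.1) p.2 & all (fun x => x \in p.2) p.1].

Definition Subst := {p : word * word | valid_subst p}.

Definition top (p : Subst) : word := (val p).1.
Definition bot (p : Subst) : word := (val p).2.

Definition emptyS : Subst := exist _ ([::], [::]) (erefl true).

Definition mkS (p : word * word) : Subst := insubd emptyS (normS p).

Definition dWHA := {freeg Subst / int}.
(* dWHA (x) dWHA : free abelian group on pairs of basis elements *)
Definition dWHA2 := {freeg (Subst * Subst) / int}.

Definition basis (p : Subst) : dWHA := << p >>.

Definition degS (p : Subst) : nat := size (undup (top p)).

Fixpoint shuffle (s : word) : word -> seq word :=
  match s with
  | [::] => fun t => [:: t]
  | a :: s' =>
      fix sh (t : word) : seq word :=
        match t with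
        | [::] => [:: a :: s']
        | b :: t' => [seq a :: u | u <- shuffle s' t] ++ [seq b :: u | u <- sh t']
        end
  end.

(* The letters of q are shifted by deg p to make the supports disjoint. *)
Definition mulB (p q : Subst) : dWHA :=
  let k := degS p in
  let r' := [seq (k + x)%N | x <- top q] in
  let s' := [seq (k + x)%N | x <- bot q] in
  \sum_(g <- shuffle (bot p) s') basis (mkS (top p ++ r', g)).

Definition wmul (x y : dWHA) : dWHA :=
  fglift (fun p => fglift (fun q => mulB p q) y) x.

Definition wone : dWHA := basis emptyS.

Definition restr (r s1 : word) : word * word := ([seq x <- r | x \in s1], s1).

Definition good_cut (s : word) (i : nat) : bool :=
  ~~ has (fun x => x \in drop i s) (take i s).

Definition coprodB (p : Subst) : dWHA2 :=
  \sum_(i < (size (bot p)).+1 | good_cut (bot p) i)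
     << (mkS (restr (top p) (take i (bot p))), mkS (restr (top p) (drop i (bot p)))) >>.

Definition coprod (x : dWHA) : dWHA2 := fglift coprodB x.

Definition counit (x : dWHA) : int := coeff emptyS x.

Definition isWHA_basis (p : Subst) : Prop :=
  exists (ys rs : seq nat),
    [/\ uniq ys, size rs = size ys, all (fun r => 0 < r)%N rs &
        top p = flatten [seq nseq rn.2 rn.1 | rn <- zip ys rs]].

Definition in_span (P : Subst -> Prop) (x : dWHA) : Prop :=
  forall p, coeff p x != 0 -> P p.

Definition inWHA := in_span isWHA_basis.
Definition inWHA_inj := in_span (fun p => isWHA_basis p /\ uniq (bot p)).
Definition inWHA_surj := in_span (fun p => isWHA_basis p /\ uniq (top p)).
Definition inMPR := in_span (fun p => uniq (top p) /\ uniq (bot p)).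

(* [y1^r1,...,yk^rk] |-> [y1,...,yk] : on WHA this is undup of the top word. *)
Definition stdB (p : Subst) : Subst := mkS (undup (top p), bot p).

Definition std_surj (x : dWHA) : dWHA := fglift (fun p => basis (stdB p)) x.

Definition std_surj2 (t : dWHA2) : dWHA2 :=
  fglift (fun pq => << (stdB pq.1, stdB pq.2) >> : dWHA2) t.

(* Erasing the repetitions of the top word commutes with everything that
   defines the Hopf structure.  It commutes with the renaming that picks
   canonical representatives; in a product the two top words use disjoint
   letters, so the erasure of their concatenation is the concatenation of the
   erasures; in a coproduct the bottom word, hence the set of good cuts, is
   untouched and restricting the top word to a set of letters commutes with
   erasing repetitions.  A basis substitution whose top word has no repeated
   letter is fixed, which gives the retraction statements. *)
From mathcomp Require Import all_boot all_algebra.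
From mathcomp Require Import freeg.
From HB Require Import structures.

Set Implicit Arguments.
Unset Strict Implicit.
Unset Printing Implicit Defensive.

Import GRing.Theory.
Local Open Scope ring_scope.

Lemma undup_map_in (T1 T2 : eqType) (f : T1 -> T2) (s : seq T1) :
  {in s &, injective f} -> undup (map f s) = map f (undup s).
Proof.
elim: s => //= x s IH f_inj.
have f_inj_s : {in s &, injective f}.
  by move=> a b ha hb; apply: f_inj; rewrite inE ?ha ?hb orbT.
have -> : (f x \in map f s) = (x \in s).
  apply/mapP/idP => [[y ys /f_inj fxy]|xs]; last by exists x.
  by rewrite fxy ?inE ?eqxx ?ys ?orbT.
by case: (x \in s); rewrite /= IH.
Qed.

Lemma index_iota0 i k : (i <= k)%N -> index i (iota 0 k) = i.
Proof.
rewrite leq_eqVlt => /orP [/eqP ->|lt_ik].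
  by rewrite memNindex ?size_iota // mem_iota /= ltnn.
have := @index_uniq _ 0%N i (iota 0 k).
by rewrite size_iota nth_iota // add0n => ->; rewrite ?iota_uniq.
Qed.

Lemma map_index_uniq (T : eqType) (u : seq T) :
  uniq u -> map (index^~ u) u = iota 0 (size u).
Proof.
move=> uniq_u; apply: (@eq_from_nth _ 0%N); rewrite ?size_map ?size_iota //.
case: u uniq_u => // x0 u' uniq_u i lt_i.
by rewrite (nth_map x0) // nth_iota // add0n index_uniq.
Qed.

Lemma rename_by_undup r w : rename_by (undup r) w = rename_by r w.
Proof. by rewrite /rename_by undup_id ?undup_uniq. Qed.

Lemma undup_rename_by r : undup (rename_by r r) = rename_by r (undup r).
Proof.
rewrite /rename_by undup_map_in // => a b ha hb.
by apply: index_inj; rewrite ?mem_undup.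
Qed.

Lemma normSK q : normS (normS q) = normS q.
Proof.
case: q => r w; rewrite /normS /=.
suff rename_idem v : rename_by (rename_by r r) (rename_by r v) = rename_by r v.
  by rewrite !rename_idem.
rewrite {1}/rename_by undup_rename_by /rename_by map_index_uniq ?undup_uniq //.
rewrite -map_comp; apply: eq_map => x /=.
by rewrite index_iota0 // index_size.
Qed.

Definition same_supp (q : word * word) : bool :=
  all (fun x => x \in q.1) q.2 && all (fun x => x \in q.2) q.1.

Lemma valid_normS q : valid_subst (normS q) = same_supp (normS q).
Proof. by rewrite /valid_subst normSK eqxx. Qed.

Lemma val_mkS q : same_supp (normS q) -> val (mkS q) = normS q.
Proof. by rewrite -valid_normS => vq; rewrite /mkS val_insubd vq. Qed.

Lemma mkS_eq_empty q : ~~ same_supp (normS q) -> mkS q = emptyS.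
Proof. by rewrite -valid_normS => vq; rewrite /mkS /insubd insubN. Qed.

Lemma normS_val (p : Subst) : normS (val p) = val p.
Proof. by case/and3P: (valP p) => /eqP. Qed.

Lemma same_supp_val (p : Subst) : same_supp (val p).
Proof. by case/and3P: (valP p) => _ ? ?; apply/andP. Qed.

Lemma rename_by_top (p : Subst) : rename_by (top p) (top p) = top p.
Proof. exact: (f_equal fst (normS_val p)). Qed.

Lemma top_ltn_deg p x : x \in top p -> (x < degS p)%N.
Proof.
rewrite -{1}rename_by_top => /mapP [y yp ->].
by rewrite /degS index_mem mem_undup.
Qed.

Lemma val_stdB p : val (stdB p) = (undup (top p), bot p).
Proof.
have normS_std : normS (undup (top p), bot p) = (undup (top p), bot p).
  rewrite /normS /= !rename_by_undup -undup_rename_by rename_by_top.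
  by rewrite [rename_by _ (bot p)](f_equal snd (normS_val p)).
rewrite /stdB val_mkS normS_std //.
case/andP: (same_supp_val p) => bot_top top_bot; apply/andP; split.
  by apply: sub_all bot_top => x; rewrite mem_undup.
by apply/allP => x; rewrite mem_undup => /(allP top_bot).
Qed.

Lemma top_stdB p : top (stdB p) = undup (top p).
Proof. by rewrite /top val_stdB. Qed.

Lemma bot_stdB p : bot (stdB p) = bot p.
Proof. by rewrite {1}/bot val_stdB. Qed.

Lemma stdB_id p : uniq (top p) -> stdB p = p.
Proof.
move=> uniq_top; apply: val_inj; rewrite val_stdB undup_id //.
by rewrite /top /bot; case: (val p).
Qed.

Lemma stdB_empty : stdB emptyS = emptyS.
Proof. exact: stdB_id. Qed.

Lemma stdB_eq_empty z : (stdB z == emptyS) = (z == emptyS).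
Proof.
apply/eqP/eqP => [std_z|->]; last exact: stdB_empty.
have bot_nil : bot z = [::] by rewrite -bot_stdB std_z.
have top_nil : top z = [::].
  case/andP: (same_supp_val z); rewrite -/(top z) -/(bot z) bot_nil.
  by case: (top z).
apply: val_inj; move: top_nil bot_nil; rewrite /top /bot.
by case: (val z) => ? ? /= -> ->.
Qed.

Lemma stdB_mkS r s : stdB (mkS (r, s)) = mkS (undup r, s).
Proof.
have normS_undup : normS (undup r, s) = (undup (rename_by r r), rename_by r s).
  by rewrite /normS /= !rename_by_undup undup_rename_by.
have supp_undup : same_supp (normS (undup r, s)) = same_supp (normS (r, s)).
  rewrite normS_undup /same_supp /=.
  congr andb; first by apply: eq_all => x; rewrite mem_undup.
  by apply: eq_all_r => x; rewrite mem_undup.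
have [supp_rs|supp_rs] := boolP (same_supp (normS (r, s))); last first.
  by rewrite (mkS_eq_empty supp_rs) stdB_empty mkS_eq_empty ?supp_undup.
apply: val_inj; rewrite val_stdB val_mkS ?supp_undup // normS_undup.
by rewrite /top /bot val_mkS.
Qed.

HB.instance Definition _ (K : choiceType) (M : lmodType int) (f : K -> M) :=
  GRing.isAdditive.Build {freeg K / int} M (fglift f) (lift_is_additive f).

Section FreeLift.
Variable K : choiceType.
Implicit Type x : {freeg K / int}.

Lemma fgliftE (M : lmodType int) (f : K -> M) x :
  fglift f x = \sum_(z <- dom x) coeff z x *: f z.
Proof.
rewrite -{1}[x]freeg_sumE raddf_sum; apply: eq_bigr => z _; exact: liftU.
Qed.

Lemma eq_in_fglift (M : lmodType int) (f g : K -> M) x :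
  {in dom x, f =1 g} -> fglift f x = fglift g x.
Proof. by move=> eq_fg; rewrite !fgliftE; apply: eq_big_seq => z /eq_fg ->. Qed.

Lemma eq_fglift (M : lmodType int) (f g : K -> M) x :
  f =1 g -> fglift f x = fglift g x.
Proof. by move=> eq_fg; apply: eq_in_fglift => z _. Qed.

Lemma raddf_fglift (M N : lmodType int) (h : {additive M -> N}) (f : K -> M) x :
  h (fglift f x) = fglift (h \o f) x.
Proof.
rewrite !fgliftE raddf_sum; apply: eq_bigr => z _.
by rewrite -[coeff z x]intz !scaler_int raddfMz.
Qed.

Lemma fglift_basis_map (L : choiceType) (M : lmodType int) (g : L -> M)
    (h : K -> L) x :
  fglift g (fglift (fun z => << h z >>) x) = fglift (g \o h) x.
Proof.
by rewrite raddf_fglift; apply: eq_fglift => z /=; rewrite liftU scale1r.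
Qed.

Lemma coeff_fglift_basis (L : choiceType) (h : K -> L) e x :
  coeff e (fglift (fun z => << h z >>) x : {freeg L / int}) =
  \sum_(z <- dom x | h z == e) coeff z x.
Proof.
rewrite fgliftE raddf_sum [RHS]big_mkcond /=; apply: eq_bigr => z _.
by rewrite coeffZ coeffU mul1r; case: (h z == e); rewrite ?mulr1 ?mulr0.
Qed.

Lemma fglift_basis_id x : fglift (fun z => << z >>) x = x.
Proof.
rewrite fgliftE -[RHS]freeg_sumE; apply: eq_bigr => z _.
by apply/eqP/freeg_eqP => y; rewrite coeffZ !coeffU mul1r.
Qed.

End FreeLift.

HB.instance Definition _ :=
  GRing.isAdditive.Build dWHA dWHA std_surj (lift_is_additive _).
HB.instance Definition _ :=
  GRing.isAdditive.Build dWHA2 dWHA2 std_surj2 (lift_is_additive _).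

Lemma std_surj_basis p : std_surj (basis p) = basis (stdB p).
Proof. by rewrite /std_surj /basis liftU scale1r. Qed.

Lemma std_surj_support x p : coeff p (std_surj x) != 0 ->
  exists2 z, coeff z x != 0 & stdB z = p.
Proof.
rewrite coeff_fglift_basis => /eqP nz_sum.
have /hasP [z zx /andP [/eqP <- nz_z]] :
    has (fun z => (stdB z == p) && (coeff z x != 0)) (dom x).
  apply/hasPn => all_zero; apply: nz_sum; rewrite big1_seq // => z /andP [e zx].
  by move: (all_zero z zx); rewrite e negbK => /eqP.
by exists z.
Qed.

Lemma std_surj_id x :
  (forall p, coeff p x != 0 -> uniq (top p)) -> std_surj x = x.
Proof.
move=> uniq_top; rewrite -[RHS]fglift_basis_id; apply: eq_in_fglift => z zx.
by rewrite /basis stdB_id // uniq_top // -mem_dom.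
Qed.

Lemma std_surj_mulB p q : std_surj (mulB p q) = mulB (stdB p) (stdB q).
Proof.
have deg_std : degS (stdB p) = degS p.
  by rewrite /degS top_stdB undup_id ?undup_uniq.
rewrite /mulB raddf_sum deg_std !top_stdB !bot_stdB.
apply: eq_bigr => g _ /=; rewrite std_surj_basis stdB_mkS.
congr (basis (mkS (_, g))).
rewrite undup_cat undup_map_inj; last exact: addnI.
congr (_ ++ _); apply/all_filterP/allP => x.
rewrite mem_undup => /top_ltn_deg lt_x.
by apply/mapP => -[y _ xy]; move: lt_x; rewrite xy ltnNge leq_addr.
Qed.

Lemma std_surj_wmul x y : std_surj (wmul x y) = wmul (std_surj x) (std_surj y).
Proof.
rewrite /wmul raddf_fglift [std_surj x]/std_surj fglift_basis_map.
apply: eq_fglift => p /=.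
rewrite raddf_fglift /std_surj fglift_basis_map; apply: eq_fglift => q /=.
exact: std_surj_mulB.
Qed.

Lemma coprodB_stdB p : coprodB (stdB p) = std_surj2 (coprodB p).
Proof.
rewrite /coprodB raddf_sum bot_stdB top_stdB; apply: eq_bigr => i _ /=.
by rewrite /std_surj2 liftU scale1r /= /restr !stdB_mkS !filter_undup.
Qed.

Lemma coprod_std_surj x : coprod (std_surj x) = std_surj2 (coprod x).
Proof.
rewrite /coprod /std_surj fglift_basis_map raddf_fglift.
by apply: eq_fglift => p /=; rewrite coprodB_stdB.
Qed.

Lemma counit_std_surj x : counit (std_surj x) = counit x.
Proof.
rewrite /counit coeff_fglift_basis.
have := coeff_fglift_basis id emptyS x; rewrite fglift_basis_id => ->.
by apply: eq_bigl => z; rewrite stdB_eq_empty.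
Qed.

Lemma isWHA_basis_uniq p : uniq (top p) -> isWHA_basis p.
Proof.
move=> uniq_top; exists (top p), (nseq (size (top p)) 1%N); split => //.
- by rewrite size_nseq.
- by apply/allP => r; rewrite mem_nseq => /andP [_ /eqP ->].
- by elim: (top p) {uniq_top} => //= a t {1}->.
Qed.

Lemma inWHA_surj_std_surj x : inWHA_surj (std_surj x).
Proof.
move=> p /std_surj_support [z _ <-].
have uniq_top : uniq (top (stdB z)) by rewrite top_stdB undup_uniq.
by split; first apply: isWHA_basis_uniq.
Qed.

Lemma inMPR_std_surj x : inWHA_inj x -> inMPR (std_surj x).
Proof.
move=> inj_x p /std_surj_support [z nz_z <-].
by rewrite top_stdB bot_stdB undup_uniq; split => //; case: (inj_x z nz_z).
Qed.

Lemma inWHA_inj_surjE x : inWHA_inj x /\ inWHA_surj x <-> inMPR x.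
Proof.
split=> [[inj_x surj_x] p nz_p | mpr_x].
  by split; [case: (surj_x p nz_p) | case: (inj_x p nz_p)].
by split=> p /mpr_x [uniq_top uniq_bot]; split=> //; apply: isWHA_basis_uniq.
Qed.

Lemma std_surj_inWHA_surj x : inWHA_surj x -> std_surj x = x.
Proof. by move=> surj_x; apply: std_surj_id => p /surj_x []. Qed.

Theorem proposition10p3 :
  (forall x, inWHA x -> inWHA_surj (std_surj x)) /\
  (forall x y, inWHA x -> inWHA y ->
     std_surj (wmul x y) = wmul (std_surj x) (std_surj y)) /\
  std_surj wone = wone /\
  (forall x, inWHA x -> coprod (std_surj x) = std_surj2 (coprod x)) /\
  (forall x, inWHA x -> counit (std_surj x) = counit x) /\
  (forall x, inWHA_surj x -> std_surj x = x) /\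
  (forall x, (inWHA_inj x /\ inWHA_surj x) <-> inMPR x) /\
  (forall x, inWHA_inj x -> inMPR (std_surj x)) /\
  (forall y, inMPR y -> exists x, inWHA_inj x /\ std_surj x = y) /\
  (forall x, inMPR x -> inWHA_inj x /\ std_surj x = x).
Proof.
have mpr_retract x : inMPR x -> inWHA_inj x /\ std_surj x = x.
  move=> /inWHA_inj_surjE [inj_x surj_x].
  by split; last exact: std_surj_inWHA_surj.
split; first by move=> x _; apply: inWHA_surj_std_surj.
split; first by move=> x y _ _; apply: std_surj_wmul.
split; first by rewrite /wone std_surj_basis stdB_empty.
split; first by move=> x _; apply: coprod_std_surj.
split; first by move=> x _; apply: counit_std_surj.
split; first exact: std_surj_inWHA_surj.
split; first exact: inWHA_inj_surjE.
split; first exact: inMPR_std_surj.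
split; last exact: mpr_retract.
by move=> y /mpr_retract mpr_y; exists y.
Qed.
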